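(* Let $a,b,c$ be positive integers and define the formal power series \begin{alignat*}{2} F_p(x,y)&=\sum_{m,n\geq 0}\zeta_p(\{a\}^m,b,\{c\}^n)x^my^n, & G_p(y)&=\sum_{n\geq0}\zeta_p(\{c\}^n)y^n,\\ F^\star_p(x,y)&=\sum_{m,n\geq 0}\zeta^\star_p(\{c\}^m,b,\{a\}^n)x^my^n, & G^\star_p(y)&=\sum_{n\geq0}\zeta^\star_p(\{a\}^n)y^n. \end{alignat*} For $q\geq 1$ put \[T_q=\begin{pmatrix}1+\frac{x}{q^a} & \frac{1}{q^b}\\ 0 & 1+\frac{y}{q^c}\end{pmatrix},\qquad U_q=\Bigl(1-\frac{x}{q^c}\Bigr)^{-1}\Bigl(1-\frac{y}{q^a}\Bigr)^{-1}\begin{pmatrix}1-\frac{y}{q^a} & \frac{1}{q^b}\\ 0 & 1-\frac{x}{q^c}\end{pmatrix}.\] Then for every integer $p\geq 0$, \[\begin{pmatrix}F_p(x,y)\\ G_p(y)\end{pmatrix}=T_pT_{p-1}\cdots T_1\begin{pmatrix}0\\1\end{pmatrix},\qquad \begin{pmatrix}F^\star_p(x,y)\\ G^\star_p(y)\end{pmatrix}=U_pU_{p-1}\cdots U_1\begin{pmatrix}0\\1\end{pmatrix}\] (for $p=0$ the products are empty, i.e. the identity matrix).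
   Context: For an integer $p\geq 0$ and positive integers $k_1,\ldots,k_n$, the truncated sums are $\zeta_p(k_1,\ldots,k_n)=\sum_{p\geq p_1>p_2>\cdots>p_n>0}p_1^{-k_1}\cdots p_n^{-k_n}$ and $\zeta^\star_p(k_1,\ldots,k_n)=\sum_{p\geq p_1\geq p_2\geq\cdots\geq p_n\geq 1}p_1^{-k_1}\cdots p_n^{-k_n}$; empty sums are $0$, and for the empty index $\zeta_p(\varnothing)=\zeta^\star_p(\varnothing)=1$ (also when $p=0$). $\{a\}^m$ denotes $m$ copies of $a$. The factors $(1-x/q^c)^{-1}$ etc. are understood as formal power series. *)

From mathcomp Require Import all_boot all_order all_algebra.
From Stdlib Require Import FunctionalExtensionality.
Set Implicit Arguments. Unset Strict Implicit. Unset Printing Implicit Defensive.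
Import Order.TTheory GRing.Theory Num.Theory.
Local Open Scope ring_scope.

(** For an index ks = (k_1,...,k_n) (n = size ks, k_i = nth 0 ks (i-1)):
    zeta_trunc p ks = sum over p >= p_1 > ... > p_n > 0 of prod p_i^{-k_i},
    zetas_trunc p ks = sum over p >= p_1 >= ... >= p_n >= 1 of prod p_i^{-k_i}.
    The tuple (p_1,...,p_n) is encoded as t : {ffun 'I_n -> 'I_p.+1}. *)
Definition zeta_trunc (p : nat) (ks : seq nat) : rat :=
  \sum_(t : {ffun 'I_(size ks) -> 'I_p.+1} |
          [forall i, 0 < val (t i)]%N &&
          [forall i, forall j, (val i < val j)%N ==> (val (t j) < val (t i))%N])
    \prod_(i < size ks) ((val (t i))%:R ^+ nth 0%N ks i)^-1.

Definition zetas_trunc (p : nat) (ks : seq nat) : rat :=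
  \sum_(t : {ffun 'I_(size ks) -> 'I_p.+1} |
          [forall i, 0 < val (t i)]%N &&
          [forall i, forall j, (val i < val j)%N ==> (val (t j) <= val (t i))%N])
    \prod_(i < size ks) ((val (t i))%:R ^+ nth 0%N ks i)^-1.

(** Formal power series in two variables x, y over rat, given by their
    coefficient function: f m n = coefficient of x^m y^n. *)
Definition fps := nat -> nat -> rat.

Definition fps_cst (r : rat) : fps := fun m n => if (m == 0%N) && (n == 0%N) then r else 0.
Definition fps_X : fps := fun m n => if (m == 1%N) && (n == 0%N) then 1 else 0.
Definition fps_Y : fps := fun m n => if (m == 0%N) && (n == 1%N) then 1 else 0.
Definition fps_add (f g : fps) : fps := fun m n => f m n + g m n.
Definition fps_scale (r : rat) (f : fps) : fps := fun m n => r * f m n.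
Definition fps_mul (f g : fps) : fps :=
  fun m n => \sum_(i < m.+1) \sum_(j < n.+1) f i j * g (m - i)%N (n - j)%N.

(** The formal inverse of 1 - r*x (resp. 1 - r*y): the geometric series. *)
Definition fps_invX (r : rat) : fps := fun m n => if n == 0%N then r ^+ m else 0.
Definition fps_invY (r : rat) : fps := fun m n => if m == 0%N then r ^+ n else 0.

Record mat2 := Mat2 { e11 : fps; e12 : fps; e21 : fps; e22 : fps }.

Definition mat2_mul (A B : mat2) : mat2 :=
  Mat2 (fps_add (fps_mul (e11 A) (e11 B)) (fps_mul (e12 A) (e21 B)))
       (fps_add (fps_mul (e11 A) (e12 B)) (fps_mul (e12 A) (e22 B)))
       (fps_add (fps_mul (e21 A) (e11 B)) (fps_mul (e22 A) (e21 B)))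
       (fps_add (fps_mul (e21 A) (e12 B)) (fps_mul (e22 A) (e22 B))).

Definition mat2_scale (s : fps) (A : mat2) : mat2 :=
  Mat2 (fps_mul s (e11 A)) (fps_mul s (e12 A)) (fps_mul s (e21 A)) (fps_mul s (e22 A)).

Definition mat2_id : mat2 := Mat2 (fps_cst 1) (fps_cst 0) (fps_cst 0) (fps_cst 1).

Definition mat2_app (A : mat2) (v : fps * fps) : fps * fps :=
  (fps_add (fps_mul (e11 A) v.1) (fps_mul (e12 A) v.2),
   fps_add (fps_mul (e21 A) v.1) (fps_mul (e22 A) v.2)).

Definition qinv (q k : nat) : rat := ((q%:R : rat) ^+ k)^-1.

Definition Tmat (a b c q : nat) : mat2 :=
  Mat2 (fps_add (fps_cst 1) (fps_scale (qinv q a) fps_X))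
       (fps_cst (qinv q b))
       (fps_cst 0)
       (fps_add (fps_cst 1) (fps_scale (qinv q c) fps_Y)).

Definition Umat (a b c q : nat) : mat2 :=
  mat2_scale (fps_mul (fps_invX (qinv q c)) (fps_invY (qinv q a)))
    (Mat2 (fps_add (fps_cst 1) (fps_scale (- qinv q a) fps_Y))
          (fps_cst (qinv q b))
          (fps_cst 0)
          (fps_add (fps_cst 1) (fps_scale (- qinv q c) fps_X))).

Fixpoint mat2_prod_down (M : nat -> mat2) (p : nat) : mat2 :=
  match p with
  | 0%N => mat2_id
  | p'.+1 => mat2_mul (M p'.+1) (mat2_prod_down M p')
  end.

Definition e2 : fps * fps := (fps_cst 0, fps_cst 1).

Definition Fser (a b c p : nat) : fps :=
  fun m n => zeta_trunc p (nseq m a ++ b :: nseq n c).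
Definition Gser (c p : nat) : fps :=
  fun m n => if m == 0%N then zeta_trunc p (nseq n c) else 0.
Definition Fsser (a b c p : nat) : fps :=
  fun m n => zetas_trunc p (nseq m c ++ b :: nseq n a).
Definition Gsser (a p : nat) : fps :=
  fun m n => if m == 0%N then zetas_trunc p (nseq n a) else 0.

Lemma fps_invX_spec (r : rat) :
  fps_mul (fps_add (fps_cst 1) (fps_scale (- r) fps_X)) (fps_invX r) = fps_cst 1.
Proof.
apply: functional_extensionality => m; apply: functional_extensionality => n.
rewrite /fps_mul /fps_add /fps_cst /fps_scale /fps_X /fps_invX.
rewrite big_ord_recl [X in X + _]big_ord_recl.
rewrite [X in _ + X + _]big1; last first.
  by move=> j _; rewrite mulr0 addr0 mul0r.
rewrite addr0 mulr0 addr0 mul1r !subn0 /=.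
case: m => [|m].
  by rewrite big_ord0 addr0; case: n.
rewrite big_ord_recl [X in _ + (_ + X)]big1 ?addr0; last first.
  move=> i _; rewrite big1 // => j _.
  by rewrite add0r mulr0 mul0r.
rewrite big_ord_recl big1 ?addr0; last first.
  by move=> j _; rewrite add0r mulr0 mul0r.
rewrite add0r mulr1 subSS subn0 /=.
case: n => [|n] //=.
  by rewrite mulNr -exprS subn0 subrr.
by rewrite mulr0 addr0.
Qed.

Lemma fps_invY_spec (r : rat) :
  fps_mul (fps_add (fps_cst 1) (fps_scale (- r) fps_Y)) (fps_invY r) = fps_cst 1.
Proof.
apply: functional_extensionality => m; apply: functional_extensionality => n.
rewrite /fps_mul /fps_add /fps_cst /fps_scale /fps_Y /fps_invY.
rewrite big_ord_recl [X in _ + X]big1 ?addr0; last first.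
  by move=> i _; rewrite big1 // => j _; rewrite mulr0 addr0 mul0r.
rewrite big_ord_recl mulr0 addr0 mul1r !subn0 /=.
case: n => [|n].
  by rewrite big_ord0 addr0 andbT; case: m.
rewrite big_ord_recl [X in _ + (_ + X)]big1 ?addr0; last first.
  by move=> j _; rewrite add0r mulr0 mul0r.
rewrite add0r mulr1 subSS subn0 /= andbF.
case: m => [|m] //=.
  by rewrite mulNr -exprS subrr.
by rewrite mulr0 addr0.
Qed.

From mathcomp Require Import all_boot all_order all_algebra.
From mathcomp Require Import zify ring.
From Stdlib Require Import FunctionalExtensionality.
Set Implicit Arguments. Unset Strict Implicit. Unset Printing Implicit Defensive.
Import Order.TTheory GRing.Theory Num.Theory.
Local Open Scope ring_scope.

(* Splitting off the largest summation index p_1 gives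
     zeta_(p+1)(k, ks)  = zeta_p(k, ks)  + (p+1)^-k zeta_p(ks),
     zeta*_(p+1)(k, ks) = zeta*_p(k, ks) + (p+1)^-k zeta*_(p+1)(ks).
   The first recursion says exactly that T_(p+1) maps the upper triangular
   matrix with last column (F_p, G_p) to the one with last column
   (F_(p+1), G_(p+1)).  In the second, the recursion is unrolled along the
   leading block {c}^m (resp. the block {a}^n), producing geometric sums in
   (p+1)^-c (resp. (p+1)^-a): these are the coefficients of the factors
   (1 - x/q^c)^-1 (1 - y/q^a)^-1 of U_q. *)

Definition fcons (T : Type) n (x : T) (t : {ffun 'I_n -> T}) : {ffun 'I_n.+1 -> T} :=
  [ffun i : 'I_n.+1 => if unlift ord0 i is Some j then t j else x].

Lemma fcons0 (T : Type) n (x : T) (t : {ffun 'I_n -> T}) : fcons x t ord0 = x.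
Proof. by rewrite ffunE unlift_none. Qed.

Lemma fconsS (T : Type) n (x : T) (t : {ffun 'I_n -> T}) j :
  fcons x t (lift ord0 j) = t j.
Proof. by rewrite ffunE liftK. Qed.

Lemma sum_ffun_fcons (T : finType) n (F : {ffun 'I_n.+1 -> T} -> rat) :
  \sum_t F t = \sum_(x : T) \sum_(t : {ffun 'I_n -> T}) F (fcons x t).
Proof.
rewrite pair_big /= (reindex (fun u : T * {ffun 'I_n -> T} => fcons u.1 u.2)) //=.
exists (fun t => (t ord0, [ffun j => t (lift ord0 j)])) => [[x t] _ | t _] /=.
- by rewrite fcons0; congr pair; apply/ffunP => j; rewrite ffunE fconsS.
- apply/ffunP => i; rewrite ffunE; case: unliftP => [j ->|->]; by rewrite ?ffunE.
Qed.

(* [chain d u t]: the indices t_0, t_1, ... lie in (0, u) and decrease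
   strictly (d = 0) or weakly (d = 1). *)
Definition chain (d u n N : nat) (t : {ffun 'I_n -> 'I_N}) : bool :=
  [&& [forall i, 0 < val (t i)]%N, [forall i, val (t i) < u]%N &
      [forall i, forall j, (val i < val j)%N ==> (val (t j) < val (t i) + d)%N]].

Lemma chainP (d u n N : nat) (t : {ffun 'I_n -> 'I_N}) :
  reflect [/\ forall i, (0 < t i)%N, forall i, (t i < u)%N &
             forall i j : 'I_n, (i < j)%N -> (t j < t i + d)%N] (chain d u t).
Proof.
apply: (iffP and3P) => [[/forallP t_gt0 /forallP t_lt /forallP t_dec]|[t_gt0 t_lt t_dec]].
  by split => // i j ij; move/forallP: (t_dec i) => /(_ j) /implyP; apply.
split; apply/forallP => // i; apply/forallP => j; apply/implyP; exact: t_dec.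
Qed.

Lemma chain_fcons d u n N (x : 'I_N) (t : {ffun 'I_n -> 'I_N}) : (d <= 1)%N ->
  chain d u (fcons x t) = [&& (0 < x)%N, (x < u)%N & chain d (x + d) t].
Proof.
move=> d_le1; apply/chainP/idP => [[t_gt0 t_lt t_dec]|].
  rewrite -(fcons0 x t) t_gt0 t_lt; apply/chainP; split => [i|i|i j ij].
  - by have := t_gt0 (lift ord0 i); rewrite fconsS.
  - by have := t_dec ord0 (lift ord0 i); rewrite lift0 fcons0 fconsS; apply.
  - by have := t_dec (lift ord0 i) (lift ord0 j); rewrite !lift0 !fconsS ltnS; apply.
case/and3P=> x_gt0 x_lt /chainP[t_gt0 t_lt t_dec].
have t_lt_u i : (t i < u)%N by have := t_lt i; lia.
split => [i|i|i j].
- by case: (unliftP ord0 i) => [i' ->|->]; rewrite ?fconsS ?fcons0.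
- by case: (unliftP ord0 i) => [i' ->|->]; rewrite ?fconsS ?fcons0.
- case: (unliftP ord0 i) => [i' ->|->]; case: (unliftP ord0 j) => [j' ->|->];
    rewrite ?fconsS ?fcons0 ?lift0 //= ?ltnS; exact: t_dec.
Qed.

Definition weight (ks : seq nat) N (t : {ffun 'I_(size ks) -> 'I_N}) : rat :=
  \prod_(i < size ks) ((val (t i))%:R ^+ nth 0%N ks i)^-1.

Lemma weight_fcons k ks N (x : 'I_N) (t : {ffun 'I_(size ks) -> 'I_N}) :
  @weight (k :: ks) N (fcons x t) = ((val x)%:R ^+ k)^-1 * weight t.
Proof.
rewrite /weight big_ord_recl fcons0; congr (_ * _).
by apply: eq_bigr => i _; rewrite fconsS lift0.
Qed.

Definition chain_sum d N ks u : rat :=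
  \sum_(t : {ffun 'I_(size ks) -> 'I_N} | chain d u t) weight t.

Lemma chain_sum_nil d N u : chain_sum d N [::] u = 1.
Proof.
rewrite /chain_sum (big_pred1 (@ffun0 _ (fun _ => 'I_N) (card_ord 0))).
  by rewrite /weight big_ord0.
move=> t /=; apply/idP/eqP => _; first by apply/ffunP => -[].
by apply/chainP; split => -[].
Qed.

Lemma chain_sum_cons d N k ks u : (d <= 1)%N ->
  chain_sum d N (k :: ks) u =
  \sum_(x < N) (if (0 < x)%N && (x < u)%N then
                  (x%:R ^+ k)^-1 * chain_sum d N ks (x + d) else 0).
Proof.
move=> d_le1; rewrite /chain_sum [LHS]big_mkcond /= sum_ffun_fcons.
apply: eq_bigr => x _; transitivity (\sum_(t : {ffun 'I_(size ks) -> 'I_N})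
   (if [&& (0 < x)%N, (x < u)%N & chain d (x + d) t]
    then ((val x)%:R ^+ k)^-1 * weight t else 0)).
  by apply: eq_bigr => t _; rewrite -chain_fcons // -weight_fcons.
case: ifP => [/andP[-> ->]|x_out] /=.
  by rewrite [X in _ * X]big_mkcond mulr_sumr; apply: eq_bigr => t _; case: ifP; rewrite ?mulr0.
by rewrite big1 // => t _; rewrite andbA x_out.
Qed.

Fixpoint chain_rec (d : nat) (ks : seq nat) (u : nat) : rat :=
  if ks is k :: ks' then
    \sum_(0 <= x < u) (if (0 < x)%N then (x%:R ^+ k)^-1 * chain_rec d ks' (x + d) else 0)
  else 1.

Lemma chain_sumE d N ks u : (d <= 1)%N -> (u <= N)%N ->
  chain_sum d N ks u = chain_rec d ks u.
Proof.
move=> d_le1; elim: ks u => [|k ks IH] u uN; first by rewrite chain_sum_nil.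
rewrite chain_sum_cons //= -(big_mkord xpredT
   (fun x => if (0 < x)%N && (x < u)%N then (x%:R ^+ k)^-1 * chain_sum d N ks (x + d) else 0)).
rewrite (big_cat_nat (leq0n u) uN) /= addrC big_nat_cond big1 ?add0r; last first.
  by move=> x /andP[/andP[ux _] _]; rewrite (ltnNge x u) ux andbF.
apply: eq_big_nat => x /andP[_ xu]; rewrite xu andbT; case: ifP => // x_gt0.
by rewrite IH //; lia.
Qed.

Lemma zeta_truncE p ks : zeta_trunc p ks = chain_rec 0 ks p.+1.
Proof.
rewrite -(@chain_sumE 0 p.+1) // /chain_sum /zeta_trunc; apply: eq_bigl => t; rewrite /chain.
have -> : [forall i, val (t i) < p.+1]%N by apply/forallP => i; exact: ltn_ord.
by congr (_ && _); apply: eq_forallb => i; apply: eq_forallb => j; rewrite addn0.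
Qed.

Lemma zetas_truncE p ks : zetas_trunc p ks = chain_rec 1 ks p.+1.
Proof.
rewrite -(@chain_sumE 1 p.+1) // /chain_sum /zetas_trunc; apply: eq_bigl => t; rewrite /chain.
have -> : [forall i, val (t i) < p.+1]%N by apply/forallP => i; exact: ltn_ord.
by congr (_ && _); apply: eq_forallb => i; apply: eq_forallb => j; rewrite addn1 ltnS.
Qed.

Lemma zeta_trunc_nil p : zeta_trunc p [::] = 1.
Proof. by rewrite zeta_truncE. Qed.

Lemma zetas_trunc_nil p : zetas_trunc p [::] = 1.
Proof. by rewrite zetas_truncE. Qed.

Lemma zeta_trunc0 k ks : zeta_trunc 0 (k :: ks) = 0.
Proof. by rewrite zeta_truncE /= big_nat1. Qed.

Lemma zetas_trunc0 k ks : zetas_trunc 0 (k :: ks) = 0.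
Proof. by rewrite zetas_truncE /= big_nat1. Qed.

Lemma zeta_truncS p k ks :
  zeta_trunc p.+1 (k :: ks) = zeta_trunc p (k :: ks) + qinv p.+1 k * zeta_trunc p ks.
Proof. by rewrite !zeta_truncE /= big_nat_recr //= addn0. Qed.

Lemma zetas_truncS p k ks :
  zetas_trunc p.+1 (k :: ks) = zetas_trunc p (k :: ks) + qinv p.+1 k * zetas_trunc p.+1 ks.
Proof. by rewrite !zetas_truncE /= big_nat_recr //= addn1. Qed.

Lemma zetas_trunc_nseqS p a n :
  zetas_trunc p.+1 (nseq n a) =
  \sum_(j < n.+1) qinv p.+1 a ^+ j * zetas_trunc p (nseq (n - j) a).
Proof.
elim: n => [|n IH]; first by rewrite big_ord1 /= expr0 mul1r !zetas_trunc_nil.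
rewrite [nseq n.+1 a]/= zetas_truncS IH [RHS]big_ord_recl /= expr0 mul1r; congr (_ + _).
by rewrite mulr_sumr; apply: eq_bigr => j _; rewrite /bump add1n subSS exprS mulrA.
Qed.

Lemma zetas_trunc_nseq_catS p a b c m n :
  zetas_trunc p.+1 (nseq m c ++ b :: nseq n a) =
  \sum_(i < m.+1) qinv p.+1 c ^+ i * zetas_trunc p (nseq (m - i) c ++ b :: nseq n a)
  + qinv p.+1 c ^+ m * qinv p.+1 b * zetas_trunc p.+1 (nseq n a).
Proof.
elim: m => [|m IH]; first by rewrite big_ord1 /= zetas_truncS !expr0 !mul1r.
rewrite [nseq m.+1 c ++ _]/= zetas_truncS IH [in RHS]big_ord_recl /= expr0 mul1r.
rewrite mulrDr mulr_sumr addrA; congr (_ + _ + _); last by rewrite exprS !mulrA.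
by apply: eq_bigr => j _; rewrite /bump add1n subSS exprS mulrA.
Qed.

Lemma fps_ext (f g : fps) : (forall m n, f m n = g m n) -> f = g.
Proof.
by move=> fg; apply: functional_extensionality => m; apply: functional_extensionality.
Qed.

Lemma big_ord_only (n k : nat) (G : nat -> rat) : (k <= n)%N ->
  (forall i, (i <= n)%N -> i != k -> G i = 0) -> \sum_(i < n.+1) G i = G k.
Proof.
move=> kn G0; rewrite (bigD1 (Ordinal (kn : k < n.+1)%N)) //= big1 ?addr0 // => i ik.
by apply: G0; [rewrite -ltnS | apply: contra ik => /eqP ik; apply/eqP/val_inj].
Qed.

Lemma fps_cst0 m n : fps_cst 0 m n = 0.
Proof. by rewrite /fps_cst; case: ifP. Qed.

Lemma fps_mulDl f g h m n :
  fps_mul (fps_add f g) h m n = fps_mul f h m n + fps_mul g h m n.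
Proof.
rewrite /fps_mul -big_split; apply: eq_bigr => i _.
by rewrite -big_split; apply: eq_bigr => j _; rewrite /fps_add mulrDl.
Qed.

Lemma fps_mulC f g m n : fps_mul f g m n = fps_mul g f m n.
Proof.
rewrite /fps_mul (reindex_inj rev_ord_inj); apply: eq_bigr => i _.
rewrite (reindex_inj rev_ord_inj); apply: eq_bigr => j _ /=.
by rewrite mulrC !subSS !subKn // -ltnS.
Qed.

Lemma fps_mul_monomial f h i0 j0 m n :
  (forall i j, (i != i0) || (j != j0) -> f i j = 0) ->
  fps_mul f h m n =
  if (i0 <= m)%N && (j0 <= n)%N then f i0 j0 * h (m - i0)%N (n - j0)%N else 0.
Proof.
move=> f0; rewrite /fps_mul.
case: (leqP i0 m) => [i0m|mi0] /=; last first.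
  rewrite big1 // => i _; rewrite big1 // => j _; rewrite f0 ?mul0r //.
  by apply/orP; left; apply: contraTneq (ltn_ord i) => ->; rewrite -leqNgt.
rewrite (@big_ord_only m i0 (fun i => \sum_(j < n.+1) f i j * h (m - i)%N (n - j)%N)) //;
  last first.
  by move=> i _ ii0; rewrite big1 // => j _; rewrite f0 ?ii0 ?mul0r.
case: (leqP j0 n) => [j0n|nj0] /=.
  by rewrite (@big_ord_only n j0 (fun j => f i0 j * h (m - i0)%N (n - j)%N)) // => j _ jj0; rewrite f0 ?jj0 ?orbT ?mul0r.
rewrite big1 // => j _; rewrite f0 ?mul0r //.
by apply/orP; right; apply: contraTneq (ltn_ord j) => ->; rewrite -leqNgt.
Qed.

Lemma fps_mul_cst r h m n : fps_mul (fps_cst r) h m n = r * h m n.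
Proof.
rewrite (@fps_mul_monomial _ _ 0 0) ?subn0 // => -[|i] [|j] //.
Qed.

Lemma fps_mul_X r h m n :
  fps_mul (fps_scale r fps_X) h m n = if m is m'.+1 then r * h m' n else 0.
Proof.
rewrite (@fps_mul_monomial _ _ 1 0).
  by case: m => [|m] //=; rewrite /fps_scale /fps_X /= mulr1 subn0 subSS subn0.
move=> i j ij; rewrite /fps_scale /fps_X; case: ifP; rewrite ?mulr0 //.
by case/andP => /eqP ie /eqP je; move: ij; rewrite ie je.
Qed.

Lemma fps_mul_Y r h m n :
  fps_mul (fps_scale r fps_Y) h m n = if n is n'.+1 then r * h m n' else 0.
Proof.
rewrite (@fps_mul_monomial _ _ 0 1).
  case: n => [|n] /=; rewrite ?andbF //.
  by rewrite /fps_scale /fps_Y /= mulr1 subn0 subSS subn0.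
move=> i j ij; rewrite /fps_scale /fps_Y; case: ifP; rewrite ?mulr0 //.
by case/andP => /eqP ie /eqP je; move: ij; rewrite ie je.
Qed.

Lemma fps_mul0l f h m n : (forall i j, f i j = 0) -> fps_mul f h m n = 0.
Proof.
by move=> f0; rewrite /fps_mul big1 // => i _; rewrite big1 // => j _; rewrite f0 mul0r.
Qed.

Lemma fps_mul_cst0l h m n : fps_mul (fps_cst 0) h m n = 0.
Proof. by apply: fps_mul0l => i j; rewrite fps_cst0. Qed.

Lemma fps_mul_cst0r h m n : fps_mul h (fps_cst 0) m n = 0.
Proof. by rewrite fps_mulC fps_mul_cst0l. Qed.

Lemma fps_mul_cst1r h m n : fps_mul h (fps_cst 1) m n = h m n.
Proof. by rewrite fps_mulC fps_mul_cst mul1r. Qed.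

Lemma fps_mul_Xseriesl f h m n : (forall i j, j != 0%N -> f i j = 0) ->
  fps_mul f h m n = \sum_(i < m.+1) f i 0%N * h (m - i)%N n.
Proof.
move=> f0; apply: eq_bigr => i _.
by rewrite (@big_ord_only n 0 (fun j => f i j * h (m - i)%N (n - j)%N)) ?subn0 //
  => j _ j0; rewrite f0 ?mul0r.
Qed.

Lemma fps_mul_Yseriesr f h m n : (forall i j, i != 0%N -> h i j = 0) ->
  fps_mul f h m n = \sum_(j < n.+1) f m j * h 0%N (n - j)%N.
Proof.
move=> h0; rewrite /fps_mul
  (@big_ord_only m m (fun i => \sum_(j < n.+1) f i j * h (m - i)%N (n - j)%N)) ?subnn // => i im ne.
by rewrite big1 // => j _; rewrite h0 ?mulr0 //; lia.
Qed.

Lemma fps_invXY r t m n : fps_mul (fps_invX r) (fps_invY t) m n = r ^+ m * t ^+ n.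
Proof.
rewrite fps_mul_Yseriesr; last by move=> i j ij; rewrite /fps_invY (negbTE ij).
rewrite (@big_ord_only n 0 (fun j => fps_invX r m j * fps_invY t 0 (n - j)%N)) ?subn0
  /fps_invX /fps_invY //= ?eqxx // => j _ jn.
by rewrite (negbTE jn) mul0r.
Qed.

Lemma fps_invXY_mul_subY r t m n :
  fps_mul (fps_mul (fps_invX r) (fps_invY t)) (fps_add (fps_cst 1) (fps_scale (- t) fps_Y)) m n
  = if n == 0%N then r ^+ m else 0.
Proof.
rewrite fps_mulC fps_mulDl fps_mul_cst fps_mul_Y mul1r !fps_invXY.
by case: n => [|n] /=; [rewrite expr0 mulr1 addr0 | rewrite fps_invXY exprS; ring].
Qed.

Lemma fps_invXY_mul_subX r t m n :
  fps_mul (fps_mul (fps_invX r) (fps_invY t)) (fps_add (fps_cst 1) (fps_scale (- r) fps_X)) m n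
  = if m == 0%N then t ^+ n else 0.
Proof.
rewrite fps_mulC fps_mulDl fps_mul_cst fps_mul_X mul1r !fps_invXY.
by case: m => [|m] /=; [rewrite expr0 mul1r addr0 | rewrite fps_invXY exprS; ring].
Qed.

Lemma fps_invXY_mul_cst r t s m n :
  fps_mul (fps_mul (fps_invX r) (fps_invY t)) (fps_cst s) m n = r ^+ m * t ^+ n * s.
Proof. by rewrite fps_mulC fps_mul_cst fps_invXY mulrC. Qed.

(* The (1,1)-entries of the products play no role. *)
Lemma prod_Tmat a b c p : exists A,
  mat2_prod_down (Tmat a b c) p = Mat2 A (Fser a b c p) (fps_cst 0) (Gser c p).
Proof.
elim: p => [|p [A IH]].
  exists (fps_cst 1); congr Mat2; apply: fps_ext => m n.
    by rewrite fps_cst0 /Fser; case: m => [|m] /=; rewrite zeta_trunc0.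
  rewrite /fps_cst /Gser.
  by case: m => [|m]; case: n => [|n] //=; rewrite ?zeta_trunc_nil ?zeta_trunc0.
eexists; rewrite /= IH /mat2_mul /=; congr Mat2; apply: fps_ext => m n; rewrite /fps_add.
- rewrite fps_mulDl !fps_mul_cst fps_mul_X mul1r /Fser /Gser.
  by case: m => [|m] /=; rewrite zeta_truncS ?mulr0 ?addr0.
- by rewrite fps_mul_cst0l fps_mul_cst0r fps_cst0 addr0.
- rewrite fps_mul_cst0l add0r fps_mulDl fps_mul_cst fps_mul_Y mul1r /Gser.
  case: m => [|m]; case: n => [|n] /=; rewrite ?zeta_trunc_nil ?mulr0 ?addr0 //.
  by rewrite zeta_truncS.
Qed.

Lemma prod_Umat a b c p : exists A,
  mat2_prod_down (Umat a b c) p = Mat2 A (Fsser a b c p) (fps_cst 0) (Gsser a p).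
Proof.
elim: p => [|p [A IH]].
  exists (fps_cst 1); congr Mat2; apply: fps_ext => m n.
    by rewrite fps_cst0 /Fsser; case: m => [|m] /=; rewrite zetas_trunc0.
  rewrite /fps_cst /Gsser.
  by case: m => [|m]; case: n => [|n] //=; rewrite ?zetas_trunc_nil ?zetas_trunc0.
have Gsser_Yseries i j : i != 0%N -> Gsser a p i j = 0 by rewrite /Gsser => /negbTE ->.
eexists; rewrite /= IH /mat2_mul /=; congr Mat2; apply: fps_ext => m n; rewrite /fps_add.
- rewrite fps_mul_Xseriesl; last by move=> i j /negbTE j0; rewrite fps_invXY_mul_subY j0.
  rewrite fps_mul_Yseriesr // /Fsser zetas_trunc_nseq_catS zetas_trunc_nseqS mulr_sumr.
  congr (_ + _); first by apply: eq_bigr => i _; rewrite fps_invXY_mul_subY.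
  by apply: eq_bigr => j _; rewrite fps_invXY_mul_cst /Gsser /=; ring.
- rewrite fps_mul0l; last by move=> i j; rewrite fps_mul_cst0r.
  by rewrite fps_mul_cst0r fps_cst0 addr0.
- rewrite fps_mul0l; last by move=> i j; rewrite fps_mul_cst0r.
  rewrite add0r fps_mul_Yseriesr // /Gsser.
  case: m => [|m] /=.
    by rewrite zetas_trunc_nseqS; apply: eq_bigr => j _; rewrite fps_invXY_mul_subX.
  by rewrite big1 // => j _; rewrite fps_invXY_mul_subX mul0r.
Qed.

Theorem lemma2p1 (a b c : nat) (ha : (0 < a)%N) (hb : (0 < b)%N) (hc : (0 < c)%N) (p : nat) :
  (Fser a b c p, Gser c p) = mat2_app (mat2_prod_down (Tmat a b c) p) e2 /\
  (Fsser a b c p, Gsser a p) = mat2_app (mat2_prod_down (Umat a b c) p) e2.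
Proof.
have [A ->] := prod_Tmat a b c p; have [B ->] := prod_Umat a b c p.
by split; congr pair; apply: fps_ext => m n;
  rewrite /fps_add fps_mul_cst0r fps_mul_cst1r add0r.
Qed.
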